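(* Let $S=\mathcal{M}^0(I,J,G,P)$ be a regular Rees matrix semigroup, let $\sigma=\sigma_1\oplus\cdots\oplus\sigma_r$ where $\sigma_1,\dots,\sigma_r$ is a complete set of pairwise inequivalent irreducible matrix representations of $G$, and let $(\pi^l,\pi^r)$ be the associated standard representations (a pair of matrix Schützenberger representations of $S$). (1) If $\pi^l$ and $\pi^r$ are both semiunitary, then $S$ is an inverse semigroup. (2) If $*$ is an involution on $S$ and $\pi^l,\pi^r$ are both semiunitary $*$-representations, then $S$ is an inverse semigroup and for every $s\in S$, $s^{*}$ is the inverse of $s$ (i.e. $ss^{*}s=s$ and $s^{*}ss^{*}=s^{*}$).
   Context: $G$ is a finite group, $G^0=G\cup\{0\}$, $I=\{1,\dots,m\}$, $J=\{1,\dots,n\}$, $P=(p_{ji})$ an $n\times m$ matrix over $G^0$. $\mathcal{M}^0(I,J,G,P)$ consists of elements $(a)_{ij}$ ($a\in G$, $i\in I$, $j\in J$) and a zero, with $(a)_{ij}\circ(b)_{kl}=(ap_{jk}b)_{il}$ if $p_{jk}\ne0$, else $0$; regular means every row and column of $P$ has a nonzero entry. For a matrix representation $\sigma:G\to GL_k(\mathbb{C})$ extended by $\sigma(0)=0$: $\pi^l((a)_{ij})$ is the $m\times m$ block matrix with $(i,l)$ block $\sigma(ap_{jl})$ ($l\in I$) and other blocks $0$; $\pi^r((a)_{ij})$ is the $n\times n$ block matrix with $(l,j)$ block $\sigma(p_{li}a)$ ($l\in J$) and other blocks $0$; both send $0\mapsto 0$. A matrix representation $\pi$ is semiunitary if $\pi(s)\pi(s)^{*}\pi(s)=\pi(s)$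 for all $s$, and a $*$-representation (for an involution $*$ on $S$, i.e. a bijection with $a^{**}=a$, $(ab)^{*}=b^{*}a^{*}$) if $\pi(s^{*})=\pi(s)^{*}$, where $^{*}$ on matrices is conjugate transpose. An inverse semigroup is one in which each $a$ has a unique $b$ with $aba=a$, $bab=b$. *)

From mathcomp Require Import all_boot all_order all_algebra all_fingroup all_character.
Set Implicit Arguments. Unset Strict Implicit. Unset Printing Implicit Defensive.
Import GRing.Theory Num.Theory.
Local Open Scope ring_scope.

(* Rees matrix semigroup M^0(I,J,G,P) with I = 'I_m, J = 'I_n;
   (a)_{ij} is Some (a,i,j) and the zero is None.
   P : 'I_n -> 'I_m -> option gT is the sandwich matrix (None = 0). *)
Definition rees (gT : finGroupType) (m n : nat) := option (gT * 'I_m * 'I_n)%type.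

Definition rees_mul (gT : finGroupType) (m n : nat) (P : 'I_n -> 'I_m -> option gT)
  (s t : rees gT m n) : rees gT m n :=
  match s, t with
  | Some (a, i, j), Some (b, k, l) =>
      match P j k with
      | Some p => Some ((a * p * b)%g, i, l)
      | None => None
      end
  | _, _ => None
  end.

Definition regular_sandwich (gT : finGroupType) (m n : nat)
  (P : 'I_n -> 'I_m -> option gT) : Prop :=
  (forall j : 'I_n, exists i : 'I_m, P j i <> None) /\
  (forall i : 'I_m, exists j : 'I_n, P j i <> None).

Definition ext0 (gT : finGroupType) (C : nzRingType) (k : nat)
  (sigma : gT -> 'M[C]_k) (x : option gT) : 'M[C]_k :=
  if x is Some g then sigma g else 0.

Definition pi_l (gT : finGroupType) (C : nzRingType) (m n k : nat)
  (P : 'I_n -> 'I_m -> option gT) (sigma : gT -> 'M[C]_k) (s : rees gT m n)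
  : 'M[C]_(\sum_(i < m) k) :=
  match s with
  | Some (a, i, j) =>
      \mxblock_(i0 < m, l < m)
        (if i0 == i then ext0 sigma (omap (fun p => (a * p)%g) (P j l)) else 0)
  | None => 0
  end.

Definition pi_r (gT : finGroupType) (C : nzRingType) (m n k : nat)
  (P : 'I_n -> 'I_m -> option gT) (sigma : gT -> 'M[C]_k) (s : rees gT m n)
  : 'M[C]_(\sum_(j < n) k) :=
  match s with
  | Some (a, i, j) =>
      \mxblock_(l < n, j0 < n)
        (if j0 == j then ext0 sigma (omap (fun p => (p * a)%g) (P l i)) else 0)
  | None => 0
  end.

Definition adjmx (C : numClosedFieldType) (p q : nat) (A : 'M[C]_(p, q)) : 'M[C]_(q, p) :=
  (map_mx (fun x => x^*) A)^T.

Definition semiunitary (C : numClosedFieldType) (T : Type) (p : nat)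
  (pi : T -> 'M[C]_p) : Prop :=
  forall s, pi s *m adjmx (pi s) *m pi s = pi s.

Definition is_involution (T : Type) (mul : T -> T -> T) (star : T -> T) : Prop :=
  (forall a, star (star a) = a) /\ (forall a b, star (mul a b) = mul (star b) (star a)).

Definition star_rep (C : numClosedFieldType) (T : Type) (p : nat)
  (star : T -> T) (pi : T -> 'M[C]_p) : Prop :=
  forall s, pi (star s) = adjmx (pi s).

Definition inverse_semigroup (T : Type) (mul : T -> T -> T) : Prop :=
  forall a, exists! b, mul (mul a b) a = a /\ mul (mul b a) b = b.

Definition complete_irr_set (gT : finGroupType) (C : fieldType) (r : nat)
  (d : 'I_r -> nat) (sig : forall i : 'I_r, mx_representation C [set: gT]%G (d i)) : Prop :=
  [/\ forall i, mx_irreducible (sig i),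
      forall i j, i != j -> ~ mx_rsim (sig i) (sig j) &
      forall p (rho : mx_representation C [set: gT]%G p),
        mx_irreducible rho -> exists i, mx_rsim rho (sig i)].

Definition dsum_rep (gT : finGroupType) (C : fieldType) (r : nat)
  (d : 'I_r -> nat) (sig : forall i : 'I_r, mx_representation C [set: gT]%G (d i))
  (g : gT) : 'M[C]_(\sum_(i < r) d i) :=
  \mxdiag_(i < r) (sig i g).

From mathcomp Require Import all_boot all_order all_algebra all_fingroup all_solvable all_character.
From mathcomp Require Import zify.
Set Implicit Arguments. Unset Strict Implicit. Unset Printing Implicit Defensive.
Import GRing.Theory Num.Theory.
Local Open Scope ring_scope.

(* Since sigma contains every irreducible representation of G, one summand
   sigma_i0 is the trivial representation, and sigma is faithful (by Maschke's
   theorem every representation, in particular the regular one, is built from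
   irreducible constituents).  The i0-component of a block sigma(x) of pi^l or
   pi^r is 1 or 0 according as x is nonzero, so reading semiunitarity of
   pi^l at (1)_{lj} on the trivial component counts the nonzero entries of row
   j of P: each row, and dually via pi^r each column, has exactly one nonzero
   entry.  A regular Rees matrix semigroup with this property is inverse,
   which gives (1).  For (2), comparing the blocks of pi^l(star s) and of the
   adjoint of pi^l(s), together with the unitarity of the nonzero blocks
   (invertible partial isometries) and faithfulness of sigma, shows that
   star s is the inverse of s. *)

Section Adjoint.
Variable C : numClosedFieldType.

Lemma adjmx0 p q : adjmx (0 : 'M[C]_(p, q)) = 0.
Proof. by apply/matrixP => k l; rewrite !mxE conjC0. Qed.

Lemma adjmxK p q (A : 'M[C]_(p, q)) : adjmx (adjmx A) = A.
Proof. by apply/matrixP => k l; rewrite !mxE conjCK. Qed.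

Lemma adjmx_scalar p (c : C) : adjmx (c%:M : 'M[C]_p) = (c^*)%:M.
Proof.
apply/matrixP => k l; rewrite !mxE eq_sym.
by case: (k == l); rewrite ?mulr1n ?mulr0n ?conjC0.
Qed.

Lemma unit_partial_isometry p (A : 'M[C]_p) :
  A \in unitmx -> A *m adjmx A *m A = A -> adjmx A = invmx A.
Proof.
move=> unitA isoA; have adjA_A : adjmx A *m A = 1%:M.
  by rewrite -[LHS](mulKmx unitA) (mulmxA A) isoA mulVmx.
by rewrite -[LHS](mulmxK unitA) adjA_A mul1mx.
Qed.

Lemma scalar_mx_inj p (a b : C) : (0 < p)%N -> (a%:M : 'M[C]_p) = b%:M -> a = b.
Proof.
move=> p_gt0 /(congr1 (fun M : 'M[C]_p => M (Ordinal p_gt0) (Ordinal p_gt0))).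
by rewrite !mxE eqxx !mulr1n.
Qed.
End Adjoint.

Section BlockMatrices.
Variables (C : numClosedFieldType) (p : nat) (p_ : 'I_p -> nat).
Local Notation sp := (\sum_i p_ i)%N.

Lemma submxblock_mul (A B : 'M[C]_sp) x z :
  submxblock (A *m B) x z = \sum_y submxblock A x y *m submxblock B y z.
Proof. by rewrite -{1}[A]submxblockK -{1}[B]submxblockK mul_mxblock mxblockK. Qed.

Lemma submxblock_adj (A : 'M[C]_sp) x z :
  submxblock (adjmx A) x z = adjmx (submxblock A z x).
Proof. by apply/matrixP => k l; rewrite !mxE. Qed.

Lemma mul_mxdiag (D E : forall i, 'M[C]_(p_ i)) :
  \mxdiag_i D i *m \mxdiag_i E i = \mxdiag_i (D i *m E i).
Proof.
rewrite {2}/mxdiag mul_mxdiag_mxblock /mxdiag; apply: eq_mxblock => i j.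
by case: eqVneq => [<-|_]; rewrite ?mulmx0 // !conform_mx_id.
Qed.

Lemma adjmx_diag (D : forall i, 'M[C]_(p_ i)) :
  adjmx (\mxdiag_i D i) = \mxdiag_i adjmx (D i).
Proof.
rewrite -[LHS]submxblockK /mxdiag; apply/eq_mxblock => i j.
rewrite submxblock_adj mxblockK eq_sym; case: eqVneq => [->|_]; last exact: adjmx0.
by rewrite !conform_mx_id.
Qed.
End BlockMatrices.

Section RowColumnBlocks.
Variables (C : numClosedFieldType) (p K : nat).
Local Notation row_block B i :=
  (\mxblock_(x < p, l < p) ((if x == i then B l else 0) : 'M[C]_K)).
Local Notation col_block B j :=
  (\mxblock_(l < p, y < p) ((if y == j then B l else 0) : 'M[C]_K)).
Local Notation blk A x z := (@submxblock C p p (fun _ => K) (fun _ => K) A x z).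

Lemma sum_mul_delta_r a b c (F : 'I_p -> 'M[C]_(a, b)) (G : 'I_p -> 'M[C]_(b, c)) i :
  \sum_y F y *m (if y == i then G y else 0) = F i *m G i.
Proof.
rewrite (bigD1 i) //= eqxx big1 ?addr0 // => y /negbTE->; exact: mulmx0.
Qed.

Lemma sum_mul_delta_l a b c (F : 'I_p -> 'M[C]_(a, b)) (G : 'I_p -> 'M[C]_(b, c)) i :
  \sum_y (if y == i then F y else 0) *m G y = F i *m G i.
Proof.
rewrite (bigD1 i) //= eqxx big1 ?addr0 // => y /negbTE->; exact: mul0mx.
Qed.

Lemma row_block_cube (B : 'I_p -> 'M[C]_K) i x l' :
  blk (row_block B i *m adjmx (row_block B i) *m row_block B i) x l' =
    if x == i then (\sum_l B l *m adjmx (B l)) *m B l' else 0.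
Proof.
set A := row_block B i.
have blkA y l : blk A y l = if y == i then B l else 0 by exact: mxblockK.
rewrite submxblock_mul.
transitivity (\sum_y blk (A *m adjmx A) x y *m (if y == i then B l' else 0)).
  by apply: eq_bigr => y _; rewrite blkA.
rewrite (sum_mul_delta_r _ (fun _ => B l')) submxblock_mul.
case: eqVneq => [->|ne].
  by congr (_ *m _); apply: eq_bigr => l _; rewrite submxblock_adj !blkA eqxx.
by rewrite big1 ?mul0mx // => l _; rewrite blkA (negbTE ne) mul0mx.
Qed.

Lemma col_block_cube (B : 'I_p -> 'M[C]_K) j l' y0 :
  blk (col_block B j *m adjmx (col_block B j) *m col_block B j) l' y0 =
    if y0 == j then B l' *m (\sum_y adjmx (B y) *m B y) else 0.
Proof.
set A := col_block B j.
have blkA l y : blk A l y = if y == j then B l else 0 by exact: mxblockK.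
have blkAA y : blk (A *m adjmx A) l' y = B l' *m adjmx (B y).
  rewrite submxblock_mul -(sum_mul_delta_l (fun _ => B l') (fun _ => adjmx (B y)) j).
  by apply: eq_bigr => x _; rewrite blkA submxblock_adj blkA; case: (x == j); rewrite ?mul0mx.
rewrite submxblock_mul; case: eqVneq => [->|ne].
  by rewrite mulmx_sumr; apply: eq_bigr => y _; rewrite blkAA blkA eqxx mulmxA.
by rewrite big1 // => y _; rewrite blkA (negbTE ne) mulmx0.
Qed.
End RowColumnBlocks.

(* Purely semigroup-theoretic part: when every row and every column of a
   regular sandwich matrix has exactly one nonzero entry, M^0(I,J,G,P) is an
   inverse semigroup, the inverse of (a)_{ij} being (p_{jl}^-1 a^-1 p_{ki}^-1)_{lk}
   for the unique l, k with p_{jl}, p_{ki} nonzero. *)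
Section ReesInverse.
Variables (gT : finGroupType) (m n : nat) (P : 'I_n -> 'I_m -> option gT).

Definition rows_single := forall j l1 l2, P j l1 <> None -> P j l2 <> None -> l1 = l2.
Definition cols_single := forall i k1 k2, P k1 i <> None -> P k2 i <> None -> k1 = k2.

Lemma rees_mul0r s : rees_mul P s None = None.
Proof. by case: s => [[[? ?] ?]|]. Qed.

Lemma group_sandwich_solve (a g b h : gT) :
  (a * g * b * h * a = a)%g -> b = (g^-1 * a^-1 * h^-1)%g.
Proof.
move=> agbha; apply: (mulgI (a * g)%g); apply: (mulIg (h * a)%g).
by rewrite !mulgA agbha !(mulgKV, mulgK, mulVg, mulgV, mul1g).
Qed.

Lemma rees_inverse_semigroup :
  regular_sandwich P -> rows_single -> cols_single -> inverse_semigroup (rees_mul P).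
Proof.
move=> [reg_row reg_col] rowP colP [[[a i] j]|]; last first.
  by exists None; split => // t [_]; rewrite rees_mul0r.
have [l] := reg_row j; have [k] := reg_col i.
case Pki: (P k i) => [gk|] // _; case Pjl: (P j l) => [gj|] // _.
exists (Some ((gj^-1 * a^-1 * gk^-1)%g, l, k)); split.
  rewrite /= Pjl /= Pki /= Pjl /=.
  by split; rewrite !mulgA !(mulgKV, mulgK, mulVg, mulgV, mul1g).
move=> [[[b l'] k']|] []; last by [].
rewrite /=; case Pjl': (P j l') => [g1|] //; case Pk'i: (P k' i) => [g2|] /=.
  rewrite Pk'i => -[/group_sandwich_solve-> _].
  have el : l' = l by apply: (rowP j); rewrite ?Pjl ?Pjl'.
  have ek : k' = k by apply: (colP i); rewrite ?Pki ?Pk'i.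
  by move: Pjl' Pk'i; rewrite el ek Pjl Pki => -[->] [->].
by rewrite Pk'i.
Qed.

(* Any involution fixes the zero, since star 0 = star (0 (star 0)) = 0. *)
Lemma involution0 (star : rees gT m n -> rees gT m n) :
  is_involution (rees_mul P) star -> star None = None.
Proof.
move=> [starK starM]; have -> : star None = star (rees_mul P None (star None)) by [].
by rewrite starM starK.
Qed.
End ReesInverse.

Section CompleteIrreducibleSet.
Variables (C : numClosedFieldType) (gT : finGroupType) (r : nat) (d : 'I_r -> nat)
  (sig : forall i : 'I_r, mx_representation C [set: gT]%G (d i)).
Hypothesis sig_complete : complete_irr_set sig.

(* In characteristic 0 every finite group is a p'-group for the
   characteristic, so Maschke's theorem applies. *)
Lemma pchar'_group : ([pchar C]^'.-group [set: gT])%g.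
Proof. by apply/pgroupP=> p _; rewrite inE /= pchar_num. Qed.

Lemma fixed_on_complements p (U W A : 'M[C]_p) :
  (U + W :=: 1%:M)%MS -> U *m A = U -> W *m A = W -> A = 1%:M.
Proof.
move=> defUW fixU fixW.
have /sub_addsmxP[u def1] : (1%:M <= U + W)%MS by rewrite defUW.
by rewrite -[A]mul1mx def1 mulmxDl -!mulmxA fixU fixW.
Qed.

(* An element acting trivially in every sigma_i acts trivially in every
   representation: by Maschke, split off a simple submodule, which is
   equivalent to some sigma_i, and induct on the degree of the complement. *)
Lemma trivial_in_all_reps (g : gT) : (forall i, sig i g = 1%:M) ->
  forall p (rho : mx_representation C [set: gT]%G p), rho g = 1%:M.
Proof.
move=> sig_g p rho; have [N lt_pN] := ubnP p.
elim: N => // N IH in p rho lt_pN *.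
have [_ _ sig_all] := sig_complete.
have [p0 | p_gt0] := posnP p; first by apply/matrixP => i; have := ltn_ord i; rewrite {2}p0.
have fix_submod V (modV : mxmodule rho V) :
    submod_repr modV g = 1%:M -> V *m rho g = V.
  move=> fixg; have : g \in rker (submod_repr modV) by apply/rkerP; rewrite inE.
  by rewrite rker_submod => /setIdP [_ /eqP].
have nz1 : (1%:M : 'M[C]_p) != 0 by rewrite -mxrank_eq0 mxrank1 -lt0n.
apply/eqP; apply: (mxsimple_exists (mxmodule1 rho) nz1) => -[V simV _].
have [modV nzV _] := simV.
have [W modW defVW dxVW] := mx_Maschke_pchar rho pchar'_group modV (submx1 V).
have fixV : V *m rho g = V.
  apply: fix_submod; have [i simVi] := sig_all _ _ (proj2 (submod_mx_irr modV) simV).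
  have : g \in rker (sig i) by apply/rkerP; rewrite inE.
  by rewrite -(rker_mx_rsim simVi) => /rkerP [].
have fixW : W *m rho g = W.
  apply: fix_submod; apply: IH.
  have rk_sum : (\rank V + \rank W)%N = p.
    by rewrite -(mxrank_disjoint_sum (mxdirect_addsP dxVW)) defVW mxrank1.
  have rkV_gt0 : (0 < \rank V)%N by rewrite lt0n mxrank_eq0.
  lia.
by rewrite (fixed_on_complements defVW fixV fixW).
Qed.

Lemma dsum_mx_repr : mx_repr [set: gT] (dsum_rep sig).
Proof.
split=> [|x y _ _].
  by rewrite /dsum_rep (eq_mxdiag (fun i => repr_mx1 (sig i))) mxdiagZ.
by rewrite /dsum_rep mul_mxdiag; apply: eq_mxdiag => i; rewrite repr_mxM ?inE.
Qed.

Definition dsum_repr := MxRepresentation dsum_mx_repr.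

Lemma dsum_rep1 : dsum_rep sig 1%g = 1%:M.
Proof. exact: (repr_mx1 dsum_repr). Qed.

Lemma dsum_repM (x y : gT) : dsum_rep sig (x * y)%g = dsum_rep sig x *m dsum_rep sig y.
Proof. exact: (repr_mxM dsum_repr (in_setT x) (in_setT y)). Qed.

Lemma dsum_rep_unit (x : gT) : dsum_rep sig x \in unitmx.
Proof. exact: (repr_mx_unit dsum_repr (in_setT x)). Qed.

Lemma dsum_repV (x : gT) : invmx (dsum_rep sig x) = dsum_rep sig x^-1%g.
Proof. exact: (esym (repr_mxV dsum_repr (in_setT x))). Qed.

Lemma dsum_rep_components (g : gT) :
  dsum_rep sig g = 1%:M -> forall i, sig i g = 1%:M.
Proof.
move=> sig_g i; have := congr1 (fun M => submxblock M i i) sig_g.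
by rewrite /dsum_rep submxblock_diag -(mxdiagZ (p_ := d)) submxblock_diag.
Qed.

(* sigma is faithful: an element in its kernel acts trivially on the
   (faithful) regular representation. *)
Lemma dsum_rep_faithful (g : gT) : dsum_rep sig g = 1%:M -> g = 1%g.
Proof.
move/dsum_rep_components/trivial_in_all_reps => reg_g.
have : g \in rker (regular_repr C [set: gT]) by apply/rkerP; rewrite inE reg_g.
by move/(subsetP (regular_mx_faithful C [set: gT])); rewrite inE => /eqP.
Qed.

Lemma trivial_mx_repr : mx_repr [set: gT] (fun _ => (1%:M : 'M[C]_1)).
Proof. by split => // x y _ _; rewrite mulmx1. Qed.

Lemma trivial_constituent : exists i0, (0 < d i0)%N /\ forall g, sig i0 g = 1%:M.
Proof.
have [_ _ sig_all] := sig_complete.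
have triv_irr : mx_irreducible (MxRepresentation trivial_mx_repr).
  exact/mx_abs_irrW/linear_mx_abs_irr.
have [i sim_i] := sig_all _ _ triv_irr.
exists i; split; first by rewrite -(mxrank_rsim sim_i).
have [B [B' _ defB]] := mx_rsim_def (mx_rsim_sym sim_i).
have sig_iE g : sig i g = B *m B' by rewrite defB ?inE //= mulmx1.
by move=> g; rewrite sig_iE -(sig_iE 1%g) repr_mx1.
Qed.
End CompleteIrreducibleSet.

Section ReesRepresentations.
Variables (C : numClosedFieldType) (gT : finGroupType) (m n : nat)
  (P : 'I_n -> 'I_m -> option gT) (r : nat) (d : 'I_r -> nat)
  (sig : forall i : 'I_r, mx_representation C [set: gT]%G (d i)).
(* sigma_i0 is the trivial representation; its block of sigma(x) records
   whether x is zero, which lets us count nonzero entries of P. *)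
Variable i0 : 'I_r.
Hypotheses (d_i0_gt0 : (0 < d i0)%N) (sig_i0 : forall g, sig i0 g = 1%:M).
Local Notation K := (\sum_(i < r) d i)%N.
Local Notation sigma := (dsum_rep sig).
Local Notation trivial_part M := (@submxblock C r r d d M i0 i0).
Local Notation lblock M x y := (@submxblock C m m (fun _ => K) (fun _ => K) M x y).
Local Notation rblock M x y := (@submxblock C n n (fun _ => K) (fun _ => K) M x y).

Definition nz (x : option gT) : C := (x != None)%:R.

Lemma nz_omap (f : gT -> gT) x : nz (omap f x) = nz x.
Proof. by case: x. Qed.

Lemma nz_idem x : nz x * nz x = nz x.
Proof. by case: x => [g|]; rewrite /nz /= ?mulr1 ?mulr0. Qed.

Lemma nz_eq1 x : x <> None -> nz x = 1.
Proof. by case: x. Qed.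

Lemma ext0_dsum x : ext0 sigma x = \mxdiag_i ext0 (sig i) x.
Proof. by case: x => [g|] //=; rewrite mxdiag0. Qed.

Lemma ext0_trivial x : ext0 (sig i0) x = (nz x)%:M.
Proof. by case: x => [g|]; rewrite /nz /= ?sig_i0 ?mulr1n // raddf0. Qed.

Lemma ext0_trivial_part x : trivial_part (ext0 sigma x) = (nz x)%:M.
Proof. by rewrite ext0_dsum submxblock_diag ext0_trivial. Qed.

Lemma ext0_triple_trivial x y z :
  trivial_part (ext0 sigma x *m adjmx (ext0 sigma y) *m ext0 sigma z) =
    (nz x * nz y * nz z)%:M.
Proof.
rewrite !ext0_dsum adjmx_diag !mul_mxdiag submxblock_diag !ext0_trivial.
by rewrite adjmx_scalar -!scalar_mxM /nz conjC_nat.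
Qed.

Lemma indicator_sum_eq1 q (b : 'I_q -> bool) :
  \sum_l (b l)%:R = 1 :> C -> forall l1 l2, b l1 -> b l2 -> l1 = l2.
Proof.
rewrite -natr_sum => /eqP; rewrite pnatr_eq1 => /sum_nat_eq1[l [_ _ b0]].
have at_l l' : b l' -> l' = l.
  by move=> bl'; apply: contraTeq bl' => /b0/(_ isT); case: (b l').
by move=> l1 l2 /at_l-> /at_l->.
Qed.

Lemma support_single q (x : 'I_q -> option gT) :
  \sum_l (nz (x l))%:M = 1%:M :> 'M[C]_(d i0) ->
  forall l1 l2, x l1 <> None -> x l2 <> None -> l1 = l2.
Proof.
rewrite -raddf_sum => /(scalar_mx_inj d_i0_gt0)/indicator_sum_eq1 single l1 l2.
by move=> /eqP x1 /eqP x2; exact: single.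
Qed.

(* Part (1), rows: the (l1,l1) block of pi^l(s) pi^l(s)* pi^l(s) for
   s = (1)_{l1 j} has trivial part (number of nonzero p_{jl}) p_{j l1}. *)
Lemma semiunitary_rows_single : semiunitary (pi_l P sigma) -> rows_single P.
Proof.
move=> semi j l1 l2 nz1; apply: (support_single (x := P j)) => //.
have := congr1 (fun M => trivial_part (lblock M l1 l1)) (semi (Some (1%g, l1, j))).
rewrite /= row_block_cube mxblockK eqxx mulmx_suml submxblock_sum ext0_trivial_part.
rewrite (eq_bigr (fun l => (nz (P j l))%:M)) => [|l _].
  by rewrite nz_omap (nz_eq1 nz1).
by rewrite ext0_triple_trivial !nz_omap nz_idem (nz_eq1 nz1) mulr1.
Qed.

(* Part (1), columns: dually, the (k1,k1) block of pi^r(s) pi^r(s)* pi^r(s)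
   for s = (1)_{i k1}. *)
Lemma semiunitary_cols_single : semiunitary (pi_r P sigma) -> cols_single P.
Proof.
move=> semi i k1 k2 nz1; apply: (support_single (x := P^~ i)) => //.
have := congr1 (fun M => trivial_part (rblock M k1 k1)) (semi (Some (1%g, i, k1))).
rewrite /= col_block_cube mxblockK eqxx mulmx_sumr submxblock_sum ext0_trivial_part.
rewrite (eq_bigr (fun k => (nz (P k i))%:M)) => [|k _].
  by rewrite nz_omap (nz_eq1 nz1).
by rewrite mulmxA ext0_triple_trivial !nz_omap (nz_eq1 nz1) mul1r nz_idem.
Qed.

(* Nonzero elements of G^0 are sent to nonzero matrices, as seen on the
   trivial component. *)
Lemma dsum_rep_neq0 g : sigma g <> 0.
Proof.
move=> /(congr1 (fun M => trivial_part M)).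
rewrite /dsum_rep submxblock_diag sig_i0 submxblock0 -(raddf0 (@scalar_mx C (d i0))).
by move=> /(scalar_mx_inj d_i0_gt0)/eqP; rewrite oner_eq0.
Qed.

Lemma ext0_dsum_eq0 x : ext0 sigma x = 0 -> x = None.
Proof. by case: x => // g /dsum_rep_neq0. Qed.

Lemma pi_l_block a i j x l :
  lblock (pi_l P sigma (Some (a, i, j))) x l =
    if x == i then ext0 sigma (omap (fun p => (a * p)%g) (P j l)) else 0.
Proof. exact: mxblockK. Qed.

Lemma pi_l_neq0 a i j : regular_sandwich P -> pi_l P sigma (Some (a, i, j)) != 0.
Proof.
case=> reg_row _; have [l nz_jl] := reg_row j.
apply/eqP => /(congr1 (fun M => lblock M i l)).
by rewrite pi_l_block eqxx submxblock0 => /ext0_dsum_eq0; case: (P j l) nz_jl.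
Qed.

Lemma star_entries star a i j b i' j' l g' :
  star_rep star (pi_l P sigma) -> star (Some (a, i, j)) = Some (b, i', j') ->
  P j' l = Some g' ->
  l = i /\ exists2 g1, P j i' = Some g1 & sigma (b * g')%g = adjmx (sigma (a * g1)%g).
Proof.
move=> starP star_s Pj'l.
have := congr1 (fun M => lblock M i' l) (starP (Some (a, i, j))).
rewrite star_s pi_l_block eqxx Pj'l submxblock_adj pi_l_block.
case: eqVneq => [->|_] /=; last by rewrite adjmx0 => /dsum_rep_neq0.
case: (P j i') => [g1|] /=; last by rewrite adjmx0 => /dsum_rep_neq0.
by split=> //; exists g1.
Qed.

(* If pi^l is semiunitary, every nonzero block sigma(a p_{jl}) of pi^l is
   unitary: rows of P being single, the (i',i') block of pi^l(s) pi^l(s)* pi^l(s)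
   for s = (a)_{i'j} is A A* A with A = sigma(a p_{ji'}). *)
Lemma semiunitary_entry_unitary a j i' g1 :
  semiunitary (pi_l P sigma) -> P j i' = Some g1 ->
  adjmx (sigma (a * g1)%g) = sigma (a * g1)^-1%g.
Proof.
move=> semi Pji'; have rowP := semiunitary_rows_single semi.
have := congr1 (fun M => lblock M i' i') (semi (Some (a, i', j))).
rewrite /= row_block_cube mxblockK eqxx (bigD1 i') //= [X in _ + X]big1 ?addr0 => [|l ne_l].
  by rewrite Pji' -dsum_repV; apply: unit_partial_isometry (dsum_rep_unit _ _).
case Pjl: (P j l) => [gl|]; last by rewrite !mul0mx.
by case/eqP: ne_l; apply: (rowP j); rewrite ?Pjl ?Pji'.
Qed.

(* Part (2): with sigma faithful, an involution making pi^l a semiunitary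
   star-representation is the inversion of the inverse semigroup: for
   s = (a)_{ij} and star s = (b)_{i'j'} the entries above satisfy
   (b g') (a g1) = 1, whence s (star s) s = s and (star s) s (star s) = star s. *)
Hypothesis sig_complete : complete_irr_set sig.

Lemma star_is_inverse star :
  regular_sandwich P -> is_involution (rees_mul P) star ->
  semiunitary (pi_l P sigma) -> star_rep star (pi_l P sigma) ->
  forall s, rees_mul P (rees_mul P s (star s)) s = s /\
            rees_mul P (rees_mul P (star s) s) (star s) = star s.
Proof.
move=> reg inv semi starP [[[a i] j]|]; last by rewrite (involution0 inv).
case star_s: (star (Some (a, i, j))) => [[[b i'] j']|]; last first.
  have := starP (Some (a, i, j)); rewrite star_s => /(congr1 (@adjmx C _ _)).
  by rewrite adjmxK adjmx0 => /esym/eqP; rewrite (negbTE (pi_l_neq0 a i j reg)).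
have [l] := reg.1 j'; case Pj'l: (P j' l) => [g'|] // _.
have [eq_li [g1 Pji' sig_bg']] := star_entries starP star_s Pj'l.
have inv_ag1 : (b * g' * (a * g1) = 1)%g.
  apply: (dsum_rep_faithful sig_complete).
  by rewrite dsum_repM sig_bg' (semiunitary_entry_unitary a semi Pji') -dsum_repM mulVg dsum_rep1.
move: Pj'l; rewrite eq_li => Pj'i.
have bg'E : (b * g' = (a * g1)^-1)%g by apply: (mulIg (a * g1)%g); rewrite mulVg.
rewrite /= Pji' /= Pj'i /= Pji' /=; split; congr Some.
  by rewrite -(mulgA (a * g1)%g b g') bg'E mulgV mul1g.
by rewrite -(mulgA (b * g')%g a g1) inv_ag1 mul1g.
Qed.
End ReesRepresentations.

Theorem mainTheorem7 (C : numClosedFieldType) (gT : finGroupType) (m n : nat)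
  (P : 'I_n -> 'I_m -> option gT) (r : nat) (d : 'I_r -> nat)
  (sig : forall i : 'I_r, mx_representation C [set: gT]%G (d i)) :
  regular_sandwich P ->
  complete_irr_set sig ->
  (semiunitary (pi_l P (dsum_rep sig)) /\ semiunitary (pi_r P (dsum_rep sig)) ->
     inverse_semigroup (rees_mul P)) /\
  (forall star : rees gT m n -> rees gT m n,
     is_involution (rees_mul P) star ->
     semiunitary (pi_l P (dsum_rep sig)) -> semiunitary (pi_r P (dsum_rep sig)) ->
     star_rep star (pi_l P (dsum_rep sig)) -> star_rep star (pi_r P (dsum_rep sig)) ->
     inverse_semigroup (rees_mul P) /\
     (forall s, rees_mul P (rees_mul P s (star s)) s = s /\
                rees_mul P (rees_mul P (star s) s) (star s) = star s)).
Proof.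
move=> reg complete; have [i0 [d_i0_gt0 sig_i0]] := trivial_constituent complete.
have inverse : semiunitary (pi_l P (dsum_rep sig)) ->
    semiunitary (pi_r P (dsum_rep sig)) -> inverse_semigroup (rees_mul P).
  move=> semi_l semi_r; apply: rees_inverse_semigroup reg _ _.
    exact: semiunitary_rows_single d_i0_gt0 sig_i0 semi_l.
  exact: semiunitary_cols_single d_i0_gt0 sig_i0 semi_r.
split=> [[semi_l semi_r]|star inv semi_l semi_r star_l _]; first exact: inverse.
split; first exact: inverse.
exact: star_is_inverse d_i0_gt0 sig_i0 complete star reg inv semi_l star_l.
Qed.
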